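(* Consider an asynchronous execution of the Arrow protocol for a set of requests $R$ on a tree $T$ (extended by virtual broadcast messages), with requests indexed $r_0,r_1,\dots$ in the resulting queueing order, and let $r_i,r_j$ be requests with $i<j$. Then (1) $t_i-t_j\le d_T(v_i,v_j)$, and (2) if $i\ge1$, $t_i+\Delta(r_i,v_{i-1})\le t_j+d_T(v_{i-1},v_j)$.
   Context: Requests $r_i=(v_i,t_i)$ are issued at node $v_i$ at time $t_i\ge0$; $r_0=(v_0,0)$ is a dummy request; $d_T$ is weighted tree distance. Arrow protocol on $T$: each node $u$ has a pointer $\mathrm{link}(u)$ (itself or a neighbour), initially pointing towards $v_0$ with $\mathrm{link}(v_0)=v_0$. When $r$ is issued at $v$: if $\mathrm{link}(v)=v$, $r$ is queued behind the previous request at $v$; otherwise atomically $\mathrm{find}(r)$ (''find predecessor'') is sent to $\mathrm{link}(v)$ and $\mathrm{link}(v):=v$. When $u$ receives $\mathrm{find}(r)$ from $w$: if $\mathrm{link}(u)=u$, atomically $r$ is queued behind the last request issued at $u$ and $\mathrm{link}(u):=w$; otherwise it is atomically forwarded to $\mathrm{link}(u)$ and $\mathrm{link}(u):=w$. Asynchronous: each delay over edge $e$ is at most the weight $w(e)$. Virtual extension: the ''find predecessor'' message of each request is additionally broadcast to the whole tree by virtual messages not influencing the protocol; virtual messages over edge $e$ have delay exactly $w(e)$, and at simultaneous arrival real messages are processed first. $\Delta(r,u)$ is the time the ''find predecessor'' message of $r$ needs from its issue to reach node $u$. *)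

From HB Require Import structures.
From mathcomp Require Import all_boot all_order all_algebra.
Set Implicit Arguments. Unset Strict Implicit. Unset Printing Implicit Defensive.
Import Order.TTheory GRing.Theory Num.Theory.
Local Open Scope ring_scope.

Section ArrowDefs.
Variables (R : realFieldType) (V : finType).

Definition simple_path (adj : rel V) (u : V) (p : seq V) (v : V) : bool :=
  [&& path adj u p, last u p == v & uniq (u :: p)].

Definition is_tree (adj : rel V) : Prop :=
  forall u v : V, exists! p, simple_path adj u p v.

Fixpoint path_weight (w : V -> V -> R) (u : V) (p : seq V) : R :=
  if p is x :: p' then w u x + path_weight w x p' else 0.

Definition weighted_tree (adj : rel V) (w : V -> V -> R) : Prop :=
  [/\ forall u v, adj u v = adj v u,
      irreflexive adj,
      forall u v, adj u v -> 0 < w u v,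
      forall u v, adj u v -> w u v = w v u
    & is_tree adj].

Definition is_tree_dist (adj : rel V) (w : V -> V -> R) (d : V -> V -> R) : Prop :=
  forall u v p, simple_path adj u p v -> d u v = path_weight w u p.

(* requests are identified by natural numbers; request 0 is the dummy r_0 *)
Record astate := AState {
  link : V -> V;
  lastreq : V -> option nat;           (* last request issued at u (r_0 at v_0) *)
  predq : nat -> option nat;           (* queue predecessor found so far *)
  msgs : seq (nat * V * V * R)         (* in-flight find(r): (r, sender, receiver, send time) *)
}.

Inductive event :=
| Issue of nat
| Recv of nat & V & V & R.             (* find(r) from sender to receiver, sent at time s, is received *)

Definition upd {A : eqType} {B : Type} (f : A -> B) (a : A) (b : B) : A -> B :=
  fun x => if x == a then b else f x.

Inductive arrow_step (w : V -> V -> R) (rv : nat -> V) (rt : nat -> R) :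
    astate -> event * R -> astate -> Prop :=
| step_issue_local st r :
    link st (rv r) = rv r ->
    arrow_step w rv rt st (Issue r, rt r)
      (AState (link st) (upd (lastreq st) (rv r) (Some r))
              (upd (predq st) r (lastreq st (rv r))) (msgs st))
| step_issue_send st r :
    link st (rv r) <> rv r ->
    arrow_step w rv rt st (Issue r, rt r)
      (AState (upd (link st) (rv r) (rv r)) (upd (lastreq st) (rv r) (Some r))
              (predq st) ((r, rv r, link st (rv r), rt r) :: msgs st))
| step_recv_queue st r x u s tau :
    (r, x, u, s) \in msgs st -> s <= tau -> tau <= s + w x u ->
    link st u = u ->
    arrow_step w rv rt st (Recv r x u s, tau)
      (AState (upd (link st) u x) (lastreq st)
              (upd (predq st) r (lastreq st u)) (rem (r, x, u, s) (msgs st)))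
| step_recv_forward st r x u s tau :
    (r, x, u, s) \in msgs st -> s <= tau -> tau <= s + w x u ->
    link st u <> u ->
    arrow_step w rv rt st (Recv r x u s, tau)
      (AState (upd (link st) u x) (lastreq st) (predq st)
              ((r, u, link st u, tau) :: rem (r, x, u, s) (msgs st))).

Inductive arrow_run (w : V -> V -> R) (rv : nat -> V) (rt : nat -> R) :
    astate -> seq (event * R) -> astate -> Prop :=
| run_nil st : arrow_run w rv rt st [::] st
| run_cons st e st' tr st'' :
    arrow_step w rv rt st e st' -> arrow_run w rv rt st' tr st'' ->
    arrow_run w rv rt st (e :: tr) st''.

Definition is_issue_of (r : nat) (e : event * R) : bool :=
  if e.1 is Issue r' then r' == r else false.

(* initial pointers point towards v0 along the tree *)
Definition init_links (adj : rel V) (w d : V -> V -> R) (v0 : V) (link0 : V -> V) : Prop :=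
  link0 v0 = v0 /\
  forall u, u != v0 -> adj u (link0 u) /\ d u v0 = w u (link0 u) + d (link0 u) v0.

Definition init_state (v0 : V) (link0 : V -> V) : astate :=
  AState link0 (fun u => if u == v0 then Some 0%N else None) (fun _ => None) [::].

Definition arrow_execution (adj : rel V) (w d : V -> V -> R) (v0 : V)
    (link0 : V -> V) (n : nat) (rv : nat -> V) (rt : nat -> R)
    (tr : seq (event * R)) (stf : astate) : Prop :=
  [/\ rv 0%N = v0 /\ rt 0%N = 0,
      forall r, (0 < r <= n)%N -> 0 <= rt r,
      init_links adj w d v0 link0,
      arrow_run w rv rt (init_state v0 link0) tr stf
    & [/\ sorted <=%R (map snd tr),
           forall r, count (is_issue_of r) tr = (0 < r <= n)%N
         & msgs stf = [::]]].

(* The find message of r is at node rv r at time rt r and at node x at every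
   receive time tau of the real message; from each such point, virtual copies
   spread over the tree with delay exactly w(e), reaching u after d x u more.
   The arrival time at u is the earliest of these. *)
Definition reach_time (d : V -> V -> R) (rv : nat -> V) (rt : nat -> R)
    (tr : seq (event * R)) (r : nat) (u : V) : R :=
  foldr (fun e m => match e with
                    | (Recv r' _ x _, tau) => if r' == r then Num.min (tau + d x u) m else m
                    | _ => m end)
        (rt r + d (rv r) u) tr.

Definition Delta d rv rt tr r u : R := reach_time d rv rt tr r u - rt r.

(** * Queueing order: q k is the k-th request in the resulting queue *)
Definition queue_order (n : nat) (stf : astate) (q : nat -> nat) : Prop :=
  [/\ q 0%N = 0%N,
      forall k, (k < n)%N -> predq stf (q k.+1) = Some (q k),
      forall k, (k <= n)%N -> (q k <= n)%N
    & forall k l, (k <= n)%N -> (l <= n)%N -> q k = q l -> k = l].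

End ArrowDefs.

(* Map every request z to the request it is going to be queued behind: its
   predecessor if already found, otherwise the last request at the sink towards
   which its find message is heading.  An atomic step either inserts a newly
   issued request in front of the current tail or short-cuts a pointer to a
   request further up the same chain, so this successor graph stays acyclic,
   reachability in it only grows, and in the final state it is the queue order.

   Every tree edge is at all times a link in one of its directions or carries a
   find message.  Hence, if u is at tree distance D from v_j, then from time
   t_j + D on the last request at the sink reached from u has r_j ahead of it:
   induct along the tree path, a message on an edge of weight w arriving within
   time w.  For (1), if t_i > t_j + d(v_i, v_j), then r_i is queued behind a
   chain leading to r_j, forcing j < i.  For (2), r_i finds r_(i-1) when its find
   message reaches v_(i-1), no earlier than t_i + Delta(r_i, v_(i-1)); at a time
   later than t_j + d(v_(i-1), v_j), r_(i-1) would already have r_j ahead. *)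

From HB Require Import structures.
From mathcomp Require Import all_boot all_order all_algebra.
From mathcomp Require Import zify lra.
From Stdlib Require Import Classical.
Set Implicit Arguments. Unset Strict Implicit. Unset Printing Implicit Defensive.
Import Order.TTheory GRing.Theory Num.Theory.

Lemma upd_eq (A : eqType) B (f : A -> B) a b : upd f a b a = b.
Proof. by rewrite /upd eqxx. Qed.

Lemma upd_neq (A : eqType) B (f : A -> B) a b x : x != a -> upd f a b x = f x.
Proof. by rewrite /upd => /negbTE ->. Qed.

Lemma uniq_map_inj_in (A B : eqType) (f : A -> B) (s : seq A) :
  uniq (map f s) -> {in s &, injective f}.
Proof.
elim: s => [|z s IH] //= /andP [hn hu] x y; rewrite !inE.
case/orP => [/eqP ->|hx]; case/orP => [/eqP ->|hy] // e.
- by move: hn; rewrite e map_f.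
- by move: hn; rewrite -e map_f.
- exact: IH.
Qed.

Lemma mem_rem_neq (T : eqType) (x y : T) s : uniq s -> x \in rem y s -> x != y.
Proof. by move=> hu; apply: contraTneq => ->; rewrite mem_rem_uniqF. Qed.

Section FunctionalGraph.
Variable T : finType.
Implicit Types (f g : T -> T) (a b u z : T).

Definition root f u := iter #|T| f u.

Definition rooted f := forall u, f (root f u) = root f u.

Lemma eq_iter_avoid f g z u k :
  (forall x, x != z -> g x = f x) ->
  (forall i, i < k -> iter i f u != z) -> iter k g u = iter k f u.
Proof.
move=> hg; elim: k => [|k IH] hk //=.
rewrite IH; last by move=> i hi; apply: hk; lia.
by rewrite hg //; apply: hk.
Qed.

Lemma ex_minn_iter f u z : (exists k, iter k f u = z) ->
  exists k, iter k f u = z /\ forall i, i < k -> iter i f u != z.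
Proof.
move=> [k0 hk0]; have exP : exists k, iter k f u == z by exists k0; apply/eqP.
case: (ex_minnP exP) => k /eqP hk hmin; exists k; split => // i hi.
by apply/negP => /hmin; lia.
Qed.

Lemma root_fixed f u :
  (exists k, f (iter k f u) = iter k f u) -> f (root f u) = root f u.
Proof.
move=> [k0 hk0].
have exP : exists k, f (iter k f u) == iter k f u by exists k0; apply/eqP.
case: (ex_minnP exP) => k /eqP hk hmin.
have hnl : ~~ looping f u k.
  apply/trajectP => -[i hi /esym hik].
  have : f (iter i f u) == iter i f u by rewrite hik; apply/eqP.
  by move=> /hmin; lia.
have hle : k.+1 <= #|T|.
  by rewrite -looping_uniq in hnl; rewrite -(size_traject f u k.+1) -(card_uniqP hnl) max_card.
rewrite /root -(subnK (ltnW hle)) iterD iter_fix //; exact: iter_fix.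
Qed.

Lemma rooted_iter_ge f u m : rooted f -> #|T| <= m -> iter m f u = root f u.
Proof. by move=> hf hm; rewrite -(subnK hm) iterD iter_fix. Qed.

Lemma root_iter f k u : rooted f -> root f (iter k f u) = root f u.
Proof. by move=> hf; rewrite /root -iterD addnC iterD iter_fix. Qed.

Lemma root_step f u : rooted f -> root f (f u) = root f u.
Proof. exact: (@root_iter f 1). Qed.

Lemma root_id f u : f u = u -> root f u = u.
Proof. exact: iter_fix. Qed.

Lemma rooted_no_return f b k : rooted f -> f b != b -> iter k f (f b) != b.
Proof.
move=> hf hb; apply/negP => /eqP hk.
have hper m : iter (m * k.+1) f b = b.
  by elim: m => [|m IH] //; rewrite mulSn iterD IH iterSr.
move: (hf b); rewrite -(rooted_iter_ge _ hf (leq_pmulr _ (ltn0Sn k))) hper => hfb.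
by rewrite hfb eqxx in hb.
Qed.

Lemma iter_upd_avoid f a b u k :
  (forall i, i < k -> iter i f u != b) -> iter k (upd f b a) u = iter k f u.
Proof. by apply: eq_iter_avoid => x /negbTE hx; rewrite /upd hx. Qed.

Lemma rooted_upd f a b : rooted f -> (forall k, iter k f a != b) -> rooted (upd f b a).
Proof.
move=> hf ha u; apply: root_fixed.
case: (classic (exists k, iter k f u = b)) => [hb|hnb].
  case: (ex_minn_iter hb) => k [hk hmin].
  exists (#|T| + k.+1).
  have ha' : iter k.+1 (upd f b a) u = a by rewrite iterS iter_upd_avoid // hk /upd eqxx.
  rewrite iterD ha' iter_upd_avoid //.
  by rewrite /upd ifN // -(rooted_iter_ge a hf (leqnn _)) ha.
exists #|T|.
have hn i : iter i f u != b by apply/eqP => e; apply: hnb; exists i.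
by rewrite iter_upd_avoid // /upd ifN ?hf // -(rooted_iter_ge u hf (leqnn _)) hn.
Qed.

Lemma rooted_upd_self f b : rooted f -> rooted (upd f b b).
Proof.
move=> hf u; apply: root_fixed.
case: (classic (exists k, iter k f u = b)) => [hb|hnb].
  case: (ex_minn_iter hb) => k [hk hmin].
  by exists k; rewrite iter_upd_avoid // hk /upd eqxx.
exists #|T|.
have hn i : iter i f u != b by apply/eqP => e; apply: hnb; exists i.
by rewrite iter_upd_avoid // /upd ifN ?hf // -(rooted_iter_ge u hf (leqnn _)) hn.
Qed.

End FunctionalGraph.

Section SuccessorChains.
Implicit Types (f g : nat -> option nat) (x y z : nat).

Definition chain f k z := iter k (obind f) (Some z).

Definition terminating f := forall z, exists k, chain f k z = None.

Definition reaches f z z' := exists k, chain f k z = Some z'.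

Lemma chainS f k z : chain f k.+1 z = obind f (chain f k z).
Proof. by []. Qed.

Lemma iter_obind_None f k : iter k (obind f) None = None.
Proof. by elim: k => //= k ->. Qed.

Lemma chainSr f k z : chain f k.+1 z = if f z is Some z1 then chain f k z1 else None.
Proof. by rewrite /chain iterSr /=; case: (f z) => //; exact: iter_obind_None. Qed.

Lemma chainD f i j z :
  chain f (i + j) z = if chain f j z is Some y then chain f i y else None.
Proof.
by rewrite /chain iterD; case: (iter j (obind f) (Some z)) => //; exact: iter_obind_None.
Qed.

Lemma chain_None_ge f i j z : chain f i z = None -> i <= j -> chain f j z = None.
Proof. by move=> hi /subnK <-; rewrite chainD hi. Qed.

Lemma reaches_refl f z : reaches f z z.
Proof. by exists 0. Qed.

Lemma reaches_edge f z z' : f z = Some z' -> reaches f z z'.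
Proof. by exists 1. Qed.

Lemma reaches_trans f x y z : reaches f x y -> reaches f y z -> reaches f x z.
Proof. by move=> [i hi] [j hj]; exists (j + i); rewrite chainD hi. Qed.

Lemma reaches_cons f x y z : f x = Some y -> reaches f y z -> reaches f x z.
Proof. by move/reaches_edge; apply: reaches_trans. Qed.

Lemma reaches_of_edges f g z z' :
  (forall x y, f x = Some y -> reaches g x y) -> reaches f z z' -> reaches g z z'.
Proof.
move=> hfg [k]; elim: k z' => [|k IH] z'; first by case=> <-; exact: reaches_refl.
rewrite chainS; case e: (chain f k z) => [y|] //= hy.
exact: reaches_trans (IH _ e) (hfg _ _ hy).
Qed.

Lemma terminating_no_cycle f x z i j :
  terminating f -> chain f i x = Some z -> chain f j x = Some z -> i < j -> False.
Proof.
move=> hf hi hj hij.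
have hper t : chain f (j + t) x = chain f (i + t) x.
  by rewrite !(addnC _ t) !chainD hi hj.
have hall t : chain f (i + t) x != None.
  elim/ltn_ind: t => t IH; case: (ltnP t (j - i)) => ht.
    apply/eqP => /(chain_None_ge (j := j)) hn.
    by have := hn ltac:(lia); rewrite hj.
  have -> : i + t = j + (t - (j - i)) by lia.
  by rewrite hper; apply: IH; lia.
case: (hf x) => k hk; case: (leqP i k) => hik.
  by have := hall (k - i); rewrite subnKC // hk.
by have := chain_None_ge hk (ltnW hik); rewrite hi.
Qed.

Lemma eq_chain f g x k :
  (forall i y, i < k -> chain f i x = Some y -> g y = f y) ->
  chain g k x = chain f k x.
Proof.
elim: k => [|k IH] h //.
rewrite !chainS IH => [|i y hi]; last by apply: h; lia.
by case e: (chain f k x) => [y|] //=; rewrite (h k y).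
Qed.

Lemma terminating_update f g (P : nat -> Prop) :
  terminating f -> (forall z, g z = f z \/ P z) ->
  (forall p, P p -> exists k, chain g k p = None) -> terminating g.
Proof.
move=> hf hgf hP x; case: (hf x) => k; elim: k x => [|k IH] x hk //.
case: (hgf x) => [hgx|/hP] //.
rewrite chainSr in hk.
case e: (f x) hk => [x1|] hk.
  by case: (IH _ hk) => k' hk'; exists k'.+1; rewrite chainSr hgx e.
by exists 1; rewrite chainSr hgx e.
Qed.

End SuccessorChains.

Section InsertNode.
Variables (f g : nat -> option nat) (r : nat) (o : option nat).
Hypothesis insert_off : forall z, z != r -> g z = f z \/ (f z = o /\ g z = Some r).
Hypothesis f_r : f r = None.
Hypothesis g_r : g r = o.
Hypothesis r_fresh : forall z, f z != Some r.
Hypothesis o_neq_r : o != Some r.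
Hypothesis f_terminating : terminating f.

Lemma insert_reaches z z' : reaches f z z' -> reaches g z z'.
Proof.
apply: reaches_of_edges => x y hxy; case: (x =P r) => [e|/eqP ne].
  by rewrite e f_r in hxy.
case: (insert_off ne) => [e|[e1 e2]]; first by apply: reaches_edge; rewrite e.
by apply: (reaches_cons e2); apply: reaches_edge; rewrite g_r -e1.
Qed.

Lemma insert_terminating : terminating g.
Proof.
have hterm_o p : o = Some p -> exists k, chain g k p = None.
  move=> hp; case: (f_terminating p) => k hk; exists k; rewrite -hk.
  apply: eq_chain => i y _ hi.
  have hyr : y != r.
    case: i hi => [|i]; first by case=> <-; apply: contraNneq o_neq_r => <-; rewrite hp.
    rewrite chainS; case e: (chain f i p) => [y0|] //= hy.
    by apply: contraNneq (r_fresh y0) => <-; rewrite hy.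
  case: (insert_off hyr) => [//|[e1 _]]; exfalso.
  by apply: (@terminating_no_cycle f p p 0 i.+1) => //; rewrite chainS hi /= e1 hp.
have hterm_r : exists k, chain g k r = None.
  case e: o => [p|]; last by exists 1; rewrite chainSr g_r e.
  by case: (hterm_o p e) => k hk; exists k.+1; rewrite chainSr g_r e.
apply: (@terminating_update f g (fun z => z = r \/ g z = Some r)) => //.
  move=> z; case: (z =P r) => [e|/eqP ne]; first by right; left.
  by case: (insert_off ne) => [e|[_ e]]; [left|right; right].
move=> p [->|hp] //; case: hterm_r => k hk.
by exists k.+1; rewrite chainSr hp.
Qed.

End InsertNode.

Section Shortcut.
Variables (f g : nat -> option nat) (y a : nat).
Hypothesis shortcut_off : forall z, z != y -> g z = f z \/ (f z = f y /\ g z = Some a).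
Hypothesis g_y : g y = f y.
Hypothesis a_reaches_y : reaches f a y.
Hypothesis f_terminating : terminating f.

Lemma shortcut_target : reaches g a y.
Proof.
case: a_reaches_y => m hm; exists m; rewrite -hm; apply: eq_chain => i z him hi.
case: (z =P y) => [->//|/eqP ne].
case: (shortcut_off ne) => [//|[e1 _]]; exfalso.
case eo: (f y) e1 => [o|] e1.
  apply: (@terminating_no_cycle f a o i.+1 m.+1) => //; first by rewrite chainS hi /= e1.
  by rewrite chainS hm /= eo.
have : chain f i.+1 a = None by rewrite chainS hi /= e1.
by move/chain_None_ge => /(_ m him); rewrite hm.
Qed.

Lemma shortcut_reaches z z' : reaches f z z' -> reaches g z z'.
Proof.
apply: reaches_of_edges => x x' hx; case: (x =P y) => [e|/eqP ne].
  by apply: reaches_edge; rewrite e g_y -e.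
case: (shortcut_off ne) => [e|[e1 e2]]; first by apply: reaches_edge; rewrite e.
apply: (reaches_cons e2); apply: reaches_trans shortcut_target _.
by apply: reaches_edge; rewrite g_y -e1.
Qed.

Lemma shortcut_terminating : terminating g.
Proof.
have hterm_y : exists k, chain g k y = None.
  case: (f_terminating y) => k hk; exists k; rewrite -hk.
  apply: eq_chain => i z _ hi; case: (z =P y) => [->//|/eqP ne].
  case: (shortcut_off ne) => [//|[e1 _]]; exfalso.
  case: i hi => [|i] hi; first by move: hi ne => [->]; rewrite eqxx.
  case eo: (f y) e1 => [o|] e1.
    apply: (@terminating_no_cycle f y o 1 i.+2) => //.
    by rewrite chainS hi /= e1.
  have : chain f 1 y = None by rewrite chainSr eo.
  by move/chain_None_ge => /(_ i.+1 isT); rewrite hi.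
have hterm_a : exists k, chain g k a = None.
  case: shortcut_target => m hm; case: hterm_y => k hk.
  by exists (k + m); rewrite chainD hm.
apply: (@terminating_update f g (fun z => g z = Some a)) => //.
  move=> z; case: (z =P y) => [->|/eqP ne]; first by left.
  by case: (shortcut_off ne) => [e|[_ e]]; [left|right].
by move=> p hp; case: hterm_a => k hk; exists k.+1; rewrite chainSr hp.
Qed.

End Shortcut.

Section Trees.
Variables (V : finType) (adj : rel V).
Hypothesis adj_tree : is_tree adj.
Hypothesis adj_irr : irreflexive adj.

Lemma adj_neq u v : adj u v -> u != v.
Proof. by apply: contraTneq => ->; rewrite adj_irr. Qed.

Lemma simple_path_adj a b p : adj a b -> simple_path adj a p b -> p = [:: b].
Proof.
move=> hab hp.
have hb : simple_path adj a [:: b] b.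
  by rewrite /simple_path /= hab eqxx /= andbT inE adj_neq.
by case: (adj_tree a b) => p0 [_ hu]; rewrite -(hu _ hp) (hu _ hb).
Qed.

Section LinkWalks.
Variable f : V -> V.
Hypothesis f_adj : forall y, f y != y -> adj y (f y).

Lemma path_traject x n : uniq (traject f x n.+1) -> path adj x (traject f (f x) n).
Proof.
elim: n x => [|n IH] x //; rewrite trajectS => /andP [hx hu].
rewrite trajectS /= IH // andbT; apply: f_adj.
by apply: contraNneq hx => efx; rewrite trajectS inE efx eqxx.
Qed.

Lemma simple_path_traject a b m :
  iter m f a = b -> (forall i, i < m -> iter i f a != b) ->
  simple_path adj a (traject f (f a) m) b.
Proof.
move=> hm hmin.
have hnl : ~~ looping f a m.
  by apply/trajectP => -[i hi hik]; move: (hmin i hi); rewrite -hik hm eqxx.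
have hu : uniq (traject f a m.+1) by rewrite looping_uniq.
rewrite /simple_path -trajectS hu last_traject hm eqxx /= !andbT.
exact: path_traject.
Qed.

(* In a tree, the only walk from a to a neighbour b is the edge itself. *)
Lemma iter_avoid_neighbour a b : adj a b -> f a != b -> forall k, iter k f a != b.
Proof.
move=> hab hfa k; apply/negP => /eqP hk.
have [m [hm hmin]] := ex_minn_iter (ex_intro _ k hk).
have := simple_path_adj hab (simple_path_traject hm hmin).
case: m hm {hmin} => [|[|m]] hm //=.
by case=> efa; rewrite efa eqxx in hfa.
Qed.

End LinkWalks.

Section InitialLinks.
Variables (R : realFieldType) (w d : V -> V -> R) (v0 : V) (link0 : V -> V).
Local Open Scope ring_scope.
Hypothesis w_pos : forall u v, adj u v -> 0 < w u v.
Hypothesis link0_init : init_links adj w d v0 link0.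

Lemma init_link_adj y : link0 y != y -> adj y (link0 y).
Proof.
case: link0_init => h0 h hy; apply: (proj1 (h y _)).
by apply: contraNneq hy => ->; rewrite h0.
Qed.

Lemma init_link_dist_lt y : y != v0 -> d (link0 y) v0 < d y v0.
Proof.
case: link0_init => _ h /h [ha ->].
by rewrite ltrDr; apply: w_pos.
Qed.

Lemma init_link_no_back u : link0 u != u -> link0 (link0 u) != u.
Proof.
case: link0_init => h0 _ hu.
have hu0 : u != v0 by apply: contraNneq hu => ->; rewrite h0.
case: (link0 u =P v0) => [->|/eqP hx0]; first by rewrite h0 eq_sym.
apply/eqP => e.
have := lt_trans (init_link_dist_lt hx0) (init_link_dist_lt hu0).
by rewrite e ltxx.
Qed.

Lemma init_link_reaches_root u : exists k, iter k link0 u = v0.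
Proof.
apply: NNPP => hnone.
have hne k : iter k link0 u != v0 by apply/eqP => e; apply: hnone; exists k.
have hdec i j : (i < j)%N -> d (iter j link0 u) v0 < d (iter i link0 u) v0.
  elim: j => [|j IH] // hij; rewrite iterS.
  apply: lt_le_trans (init_link_dist_lt (hne j)) _.
  case: (ltnP i j) => hi; first exact/ltW/IH.
  by have -> : i = j by lia.
have : ~~ looping link0 u #|V|.
  by apply/trajectP => -[i hi hik]; have := hdec _ _ hi; rewrite -hik ltxx.
rewrite -looping_uniq => /card_uniqP; rewrite size_traject => hc.
by have := max_card (mem (traject link0 u #|V|.+1)); rewrite hc ltnn.
Qed.

Lemma init_links_rooted : rooted link0.
Proof.
move=> u; apply: root_fixed; case: (init_link_reaches_root u) => k hk.
by exists k; rewrite hk; case: link0_init.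
Qed.

Lemma init_link_simple_path x :
  exists k, simple_path adj x (traject link0 (link0 x) k) v0 /\ iter k link0 x = v0.
Proof.
have [m [hm hmin]] := ex_minn_iter (init_link_reaches_root x).
by exists m; split => //; apply: simple_path_traject => //; exact: init_link_adj.
Qed.

Hypothesis adj_sym : symmetric adj.

Lemma init_link_edge p u : adj p u -> link0 u = p \/ link0 p = u.
Proof.
move=> hpu; have hup : adj u p by rewrite adj_sym.
case: (link0 u =P p) => hu'; first by left.
case: (link0 p =P u) => hp'; first by right.
exfalso.
have hnu := iter_avoid_neighbour init_link_adj hup (introN eqP hu').
case: (init_link_simple_path u) => ku [spu _].
case: (init_link_simple_path p) => kp [spp _].
have sp2 : simple_path adj p (u :: traject link0 (link0 u) ku) v0.
  move: spu => /and3P [h1 h2 h3]; apply/and3P; split => //; first by rewrite /= hpu.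
  rewrite cons_uniq h3 andbT -trajectS.
  by apply/trajectP => -[i _ hi]; move: (hnu i); rewrite -hi eqxx.
case: (adj_tree p v0) => p0 [_ hun].
have := hun _ sp2; rewrite (hun _ spp).
by case: kp {spp} => [|kp] //; rewrite trajectS => -[].
Qed.

End InitialLinks.

End Trees.

Section Protocol.
Variables (R : realFieldType) (V : finType) (adj : rel V) (w : V -> V -> R)
  (rv : nat -> V) (rt : nat -> R).
Hypothesis adj_sym : symmetric adj.
Hypothesis adj_irr : irreflexive adj.
Hypothesis adj_tree : is_tree adj.

Notation state := (astate R V).
Notation msg := (nat * V * V * R)%type.
Notation timed_event := (event R V * R)%type.
Notation step := (arrow_step w rv rt).

Definition mreq (m : msg) := m.1.1.1.
Definition msender (m : msg) := m.1.1.2.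
Definition mreceiver (m : msg) := m.1.2.
Definition msent (m : msg) := m.2.

Definition on_edge (m : msg) p u :=
  ((msender m == p) && (mreceiver m == u)) || ((msender m == u) && (mreceiver m == p)).

Definition target (ms : seq msg) z := ohead [seq mreceiver m | m <- ms & mreq m == z].

Definition tail (s : state) u := lastreq s (root (link s) u).

Definition qpred (s : state) z :=
  if predq s z is Some p then Some p else
  if target (msgs s) z is Some b then tail s b else None.

Definition issued (pre : seq timed_event) y := has (is_issue_of y) pre.

Definition fresh_issue (pre : seq timed_event) (e : timed_event) :=
  forall r, e.1 = @Issue R V r -> r != 0 /\ ~~ issued pre r.

Lemma issued_rcons pre e y : issued (rcons pre e) y = issued pre y || is_issue_of y e.
Proof. by rewrite /issued has_rcons orbC. Qed.

Lemma issued_rcons_mono pre e y : issued pre y -> issued (rcons pre e) y.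
Proof. by rewrite issued_rcons => ->. Qed.

Lemma issued_rcons_issue pre r t : issued (rcons pre (@Issue R V r, t)) r.
Proof. by rewrite issued_rcons /is_issue_of /= eqxx orbT. Qed.

Lemma on_edge_swap m m' :
  on_edge m' (msender m) (mreceiver m) = on_edge m (msender m') (mreceiver m').
Proof.
rewrite /on_edge; apply/idP/idP.
  by case/orP => /andP [/eqP -> /eqP ->]; rewrite !eqxx ?orbT.
by case/orP => /andP [/eqP -> /eqP ->]; rewrite !eqxx ?orbT.
Qed.

Lemma target_mem ms m : uniq (map mreq ms) -> m \in ms -> target ms (mreq m) = Some (mreceiver m).
Proof.
rewrite /target; elim: ms => [|m1 ms IH] //= /andP [hn hu].
rewrite inE => /orP [/eqP ->|hm]; first by rewrite eqxx.
case: ifP => [/eqP e|_]; last exact: IH.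
by move: hn; rewrite e map_f.
Qed.

Lemma target_none ms z : (forall m, m \in ms -> mreq m != z) -> target ms z = None.
Proof.
rewrite /target; elim: ms => [|m1 ms IH] //= h.
rewrite (negbTE (h m1 (mem_head _ _))); apply: IH => m hm.
by apply: h; rewrite inE hm orbT.
Qed.

Lemma target_rem ms m0 z : uniq (map mreq ms) -> m0 \in ms -> z != mreq m0 ->
  target (rem m0 ms) z = target ms z.
Proof.
rewrite /target; elim: ms => [|m1 ms IH] //= /andP [hn hu] hm0 hz.
case: (m1 =P m0) => [->|ne]; first by rewrite eq_sym (negbTE hz).
rewrite /=; case: ifP => // _; apply: IH => //.
by move: hm0; rewrite inE => /orP [/eqP e|//]; rewrite e in ne.
Qed.

Lemma mreq_rem_neq ms m0 m : uniq (map mreq ms) -> m0 \in ms -> m \in rem m0 ms ->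
  mreq m != mreq m0.
Proof.
move=> hu hm0 hm; apply: contra_neq (mem_rem_neq (map_uniq hu) hm).
exact: (uniq_map_inj_in hu (mem_rem hm) hm0).
Qed.

Lemma target_rem_self ms m0 : uniq (map mreq ms) -> m0 \in ms -> target (rem m0 ms) (mreq m0) = None.
Proof. by move=> hu hm; apply: target_none => m; exact: mreq_rem_neq. Qed.

Definition issued0 pre z := (z == 0) || issued pre z.

Lemma issued0_rcons pre e z : issued0 pre z -> issued0 (rcons pre e) z.
Proof. by rewrite /issued0 => /orP [-> //|/(issued_rcons_mono e) ->]; rewrite orbT. Qed.

Definition links_adj (s : state) := forall u, link s u != u -> adj u (link s u).

Definition links_no_back (s : state) := forall u, link s u != u -> link s (link s u) != u.

Definition msgs_on_edges (s : state) := forall m, m \in msgs s ->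
  [/\ adj (msender m) (mreceiver m), link s (msender m) != mreceiver m
    & link s (mreceiver m) != msender m].

Definition msgs_edge_disjoint (s : state) := forall m m', m \in msgs s -> m' \in msgs s ->
  m != m' -> ~~ on_edge m' (msender m) (mreceiver m).

Definition edges_covered (s : state) := forall p u, adj p u ->
  [\/ link s u = p, link s p = u | exists2 m, m \in msgs s & on_edge m p u].

Definition msgs_pending pre (s : state) := forall m, m \in msgs s ->
  issued pre (mreq m) /\ predq s (mreq m) = None.

Definition predq_issued pre (s : state) := forall y z, predq s y = Some z ->
  issued pre y /\ issued0 pre z.

Definition lastreq_issued pre (s : state) := forall u x, lastreq s u = Some x ->
  rv x = u /\ issued0 pre x.

Definition msgs_sent_in (pre : seq timed_event) (s : state) := forall m, m \in msgs s ->
  has (fun e : timed_event => e.2 == msent m) pre.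

Record state_inv pre (s : state) : Prop := {
  inv_links_adj : links_adj s;
  inv_links_no_back : links_no_back s;
  inv_msgs_on_edges : msgs_on_edges s;
  inv_msgs_uniq : uniq (map mreq (msgs s));
  inv_msgs_edge_disjoint : msgs_edge_disjoint s;
  inv_edges_covered : edges_covered s;
  inv_msgs_pending : msgs_pending pre s;
  inv_predq_issued : predq_issued pre s;
  inv_lastreq_issued : lastreq_issued pre s;
  inv_links_rooted : rooted (link s);
  inv_msgs_sent_in : msgs_sent_in pre s }.

Section StateInvariant.
Variables (pre : seq timed_event) (s : state).
Hypothesis s_inv : state_inv pre s.

Lemma msg_link_avoid m : m \in msgs s -> forall k, iter k (link s) (msender m) != mreceiver m.
Proof.
move=> hm; case: (inv_msgs_on_edges s_inv hm) => hadj h1 _.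
exact: (iter_avoid_neighbour adj_tree adj_irr (inv_links_adj s_inv) hadj h1).
Qed.

Lemma link_off_msg_edge a m : m \in msgs s -> ~~ on_edge m a (link s a).
Proof.
move=> hm; case: (inv_msgs_on_edges s_inv hm) => _ h1 h2; rewrite /on_edge.
by apply/negP => /orP [] /andP [/eqP e1 /eqP e2]; [move: h1|move: h2]; rewrite e1 e2 eqxx.
Qed.

Lemma predq_unissued r : ~~ issued pre r -> predq s r = None.
Proof.
move=> hn; case e: (predq s r) => [z|] //.
by case: (inv_predq_issued s_inv e) => hi _; rewrite hi in hn.
Qed.

Lemma mreq_unissued r m : ~~ issued pre r -> m \in msgs s -> mreq m != r.
Proof.
move=> hn hm; apply: contraNneq hn => <-.
by case: (inv_msgs_pending s_inv hm).
Qed.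

(* Covers a node sending its own find message (z = y) and forwarding one
   (z = the node it came from). *)
Lemma new_msg_on_edge y z : link s y != y -> z != link s y ->
  [/\ adj y (link s y), upd (link s) y z y != link s y & upd (link s) y z (link s y) != y].
Proof.
move=> hy hz; rewrite upd_eq upd_neq //.
by split => //; [exact: (inv_links_adj s_inv) | exact: (inv_links_no_back s_inv)].
Qed.

Lemma recv_keeps_on_edge m0 m : m0 \in msgs s -> m \in rem m0 (msgs s) ->
  [/\ adj (msender m) (mreceiver m),
      upd (link s) (mreceiver m0) (msender m0) (msender m) != mreceiver m
    & upd (link s) (mreceiver m0) (msender m0) (mreceiver m) != msender m].
Proof.
move=> hm0 hmr; have hm := mem_rem hmr.
have hne : m0 != m.
  by rewrite eq_sym; exact: mem_rem_neq (map_uniq (inv_msgs_uniq s_inv)) hmr.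
have hdis := inv_msgs_edge_disjoint s_inv hm0 hm hne.
case: (inv_msgs_on_edges s_inv hm) => hadj ha hb.
rewrite /upd; split => //.
  case: (msender m =P mreceiver m0) => [e|_] //; move: hdis; apply: contraNneq => e'.
  by rewrite /on_edge e e' !eqxx orbT.
case: (mreceiver m =P mreceiver m0) => [e|_] //; move: hdis; apply: contraNneq => e'.
by rewrite /on_edge e e' !eqxx.
Qed.

End StateInvariant.

Lemma step_links_adj pre s e s' : state_inv pre s -> step s e s' -> links_adj s'.
Proof.
move=> hI hst; case: hst hI => {s e s'} [s r _|s r _|s r x u sg tau hm _ _ _|s r x u sg tau hm _ _ _] hI y /=;
  first exact: (inv_links_adj hI).
- by rewrite /upd; case: (y =P rv r) => [->|_] /=; [rewrite eqxx | exact: (inv_links_adj hI)].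
all: rewrite /upd; case: (y =P u) => [-> _|_] /=; last exact: (inv_links_adj hI).
all: by rewrite adj_sym; case: (inv_msgs_on_edges hI hm).
Qed.

Lemma links_no_back_upd (f : V -> V) u x :
  (forall y, f y != y -> f (f y) != y) -> (x != u -> f x != u) ->
  forall y, upd f u x y != y -> upd f u x (upd f u x y) != y.
Proof.
move=> hf hx y; case: (y =P u) => [->|/eqP hyu]; rewrite ?upd_eq => hy.
  by rewrite upd_neq // hx.
rewrite upd_neq // in hy *; case: (f y =P u) => [hfy|/eqP hfyu]; last by rewrite upd_neq // hf.
rewrite hfy upd_eq; apply/eqP => exy; have hxu : x != u by rewrite exy.
by move: (hx hxu); rewrite exy hfy eqxx.
Qed.

Lemma step_links_no_back pre s e s' : state_inv pre s -> step s e s' -> links_no_back s'.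
Proof.
move=> hI hst; case: hst hI => {s e s'} [s r _|s r _|s r x u sg tau hm _ _ _|s r x u sg tau hm _ _ _] hI /=;
  first exact: (inv_links_no_back hI).
- by apply: links_no_back_upd (inv_links_no_back hI) _; rewrite eqxx.
all: apply: links_no_back_upd (inv_links_no_back hI) _ => _.
all: by case: (inv_msgs_on_edges hI hm).
Qed.

Lemma upd_self_neq (f : V -> V) v a b : a != b -> f a != b -> upd f v v a != b.
Proof. by rewrite /upd; case: ifP => [/eqP ->|]. Qed.

Lemma step_msgs_on_edges pre s e s' : state_inv pre s -> step s e s' -> msgs_on_edges s'.
Proof.
move=> hI hst; case: hst hI => {s e s'} [s r _|s r hl|s r x u sg tau hm _ _ _|s r x u sg tau hm _ _ hl] hI m /=;
  first exact: (inv_msgs_on_edges hI).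
- rewrite inE => /orP [/eqP ->|hm].
    by apply: (new_msg_on_edge hI); apply/eqP => // e; apply: hl.
  case: (inv_msgs_on_edges hI hm) => hadj ha hb; have hne := adj_neq adj_irr hadj.
  by split; rewrite // upd_self_neq // eq_sym.
- exact: (recv_keeps_on_edge hI hm).
- rewrite inE => /orP [/eqP ->|hmr]; last exact: (recv_keeps_on_edge hI hm).
  apply: (new_msg_on_edge hI); first exact/eqP.
  by rewrite eq_sym; case: (inv_msgs_on_edges hI hm).
Qed.

Lemma step_msgs_uniq pre s e s' : state_inv pre s -> step s e s' -> fresh_issue pre e ->
  uniq (map mreq (msgs s')).
Proof.
move=> hI hst; case: hst hI => {s e s'} [s r _|s r _|s r x u sg tau hm _ _ _|s r x u sg tau hm _ _ _] hI hfresh /=;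
  first exact: (inv_msgs_uniq hI).
- case: (hfresh r erefl) => _ hn; rewrite (inv_msgs_uniq hI) andbT.
  by apply/mapP => -[m hm em]; move: (mreq_unissued hI hn hm); rewrite -em eqxx.
all: have hrem := subseq_uniq (map_subseq mreq (rem_subseq (r, x, u, sg) _)) (inv_msgs_uniq hI).
- exact: hrem.
- rewrite hrem andbT.
  by apply/mapP => -[m hmr em]; move: (mreq_rem_neq (inv_msgs_uniq hI) hm hmr); rewrite -em eqxx.
Qed.

Lemma step_msgs_edge_disjoint pre s e s' : state_inv pre s -> step s e s' -> msgs_edge_disjoint s'.
Proof.
move=> hI hst; case: hst hI => {s e s'} [s r _|s r _|s r x u sg tau hm _ _ _|s r x u sg tau hm _ _ _] hI m m' /=;
  first exact: (inv_msgs_edge_disjoint hI).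
- rewrite !inE => /orP [/eqP ->|hm] /orP [/eqP ->|hm']; rewrite ?eqxx //.
  + by move=> _; exact: (link_off_msg_edge hI (rv r) hm').
  + by move=> _; rewrite on_edge_swap; exact: (link_off_msg_edge hI (rv r) hm).
  + exact: (inv_msgs_edge_disjoint hI hm hm').
- by move=> hm1 hm2; apply: (inv_msgs_edge_disjoint hI (mem_rem hm1) (mem_rem hm2)).
- rewrite !inE => /orP [/eqP ->|hm1] /orP [/eqP ->|hm2]; rewrite ?eqxx //.
  + by move=> _; exact: (link_off_msg_edge hI u (mem_rem hm2)).
  + by move=> _; rewrite on_edge_swap; exact: (link_off_msg_edge hI u (mem_rem hm1)).
  + exact: (inv_msgs_edge_disjoint hI (mem_rem hm1) (mem_rem hm2)).
Qed.

Lemma on_edge_upd (f : V -> V) m p y : on_edge m p y ->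
  upd f (mreceiver m) (msender m) y = p \/ upd f (mreceiver m) (msender m) p = y.
Proof. by case/orP => /andP [/eqP <- /eqP <-]; [left|right]; rewrite upd_eq. Qed.

Lemma step_edges_covered pre s e s' : state_inv pre s -> step s e s' -> edges_covered s'.
Proof.
move=> hI hst; case: hst hI => {s e s'} [s r _|s r _|s r x u sg tau hm _ _ hl|s r x u sg tau hm _ _ _] hI p y hpy /=;
  first exact: (inv_edges_covered hI hpy).
all: have [hy|hp|[m hm' hse]] := inv_edges_covered hI hpy.
- case: (y =P rv r) => [ey|/eqP ne]; last by constructor 1; rewrite upd_neq.
  constructor 3; exists (r, rv r, link s (rv r), rt r); first exact: mem_head.
  by rewrite /on_edge /= -ey hy !eqxx orbT.
- case: (p =P rv r) => [ep|/eqP ne]; last by constructor 2; rewrite upd_neq.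
  constructor 3; exists (r, rv r, link s (rv r), rt r); first exact: mem_head.
  by rewrite /on_edge /= -ep hp !eqxx.
- by constructor 3; exists m => //; rewrite inE hm' orbT.
- case: (y =P u) => [ey|/eqP ne]; last by constructor 1; rewrite upd_neq.
  by move: hpy; rewrite -hy ey hl adj_irr.
- case: (p =P u) => [ep|/eqP ne]; last by constructor 2; rewrite upd_neq.
  by move: hpy; rewrite -hp ep hl adj_irr.
- case: (m =P (r, x, u, sg)) => [em|/eqP nm]; last by constructor 3; exists m => //; exact: rem_mem.
  by move: hse; rewrite em => /(on_edge_upd (link s)) []; [constructor 1|constructor 2].
- case: (y =P u) => [ey|/eqP ne]; last by constructor 1; rewrite upd_neq.
  constructor 3; exists (r, u, link s u, tau); first exact: mem_head.
  by rewrite /on_edge /= -ey hy !eqxx orbT.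
- case: (p =P u) => [ep|/eqP ne]; last by constructor 2; rewrite upd_neq.
  constructor 3; exists (r, u, link s u, tau); first exact: mem_head.
  by rewrite /on_edge /= -ep hp !eqxx.
- case: (m =P (r, x, u, sg)) => [em|/eqP nm].
    by move: hse; rewrite em => /(on_edge_upd (link s)) []; [constructor 1|constructor 2].
  by constructor 3; exists m; rewrite ?inE ?rem_mem ?orbT.
Qed.

Lemma step_msgs_pending pre s e s' : state_inv pre s -> step s e s' -> fresh_issue pre e ->
  msgs_pending (rcons pre e) s'.
Proof.
move=> hI hst; case: hst hI => {s e s'} [s r _|s r _|s r x u sg tau hm _ _ _|s r x u sg tau hm _ _ _] hI hfresh m /=.
- case: (hfresh r erefl) => _ hn hm.
  case: (inv_msgs_pending hI hm) => hi hp; split; first exact: issued_rcons_mono.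
  by rewrite upd_neq // (mreq_unissued hI hn hm).
- case: (hfresh r erefl) => _ hn; rewrite inE => /orP [/eqP ->|hm].
    by split; [exact: issued_rcons_issue | exact: (predq_unissued hI hn)].
  by case: (inv_msgs_pending hI hm) => hi hp; split => //; exact: issued_rcons_mono.
- move=> hmr; case: (inv_msgs_pending hI (mem_rem hmr)) => hi hp.
  by split; [exact: issued_rcons_mono | rewrite upd_neq // (mreq_rem_neq (inv_msgs_uniq hI) hm hmr)].
- have hmsg m' : m' \in msgs s -> issued (rcons pre (Recv r x u sg, tau)) (mreq m') /\
      predq s (mreq m') = None.
    by case/(inv_msgs_pending hI) => hi hp; split => //; exact: issued_rcons_mono.
  by rewrite inE => /orP [/eqP ->|/mem_rem /hmsg //]; exact: (hmsg _ hm).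
Qed.

Lemma step_predq_issued pre s e s' : state_inv pre s -> step s e s' ->
  predq_issued (rcons pre e) s'.
Proof.
move=> hI hst.
have hold y z : predq s y = Some z -> issued (rcons pre e) y /\ issued0 (rcons pre e) z.
  by case/(inv_predq_issued hI) => hy hz; split; [exact: issued_rcons_mono | exact: issued0_rcons].
have hnew y v z : issued (rcons pre e) y -> lastreq s v = Some z ->
    issued (rcons pre e) y /\ issued0 (rcons pre e) z.
  by move=> hy /(inv_lastreq_issued hI) [_ hz]; split => //; exact: issued0_rcons.
case: hst hI hold hnew => {s e s'} [s r _|s r _|s r x u sg tau hm _ _ _|s r x u sg tau hm _ _ _]
  hI hold hnew y z /=; try exact: hold.
- rewrite /upd; case: (y =P r) => [->|_]; last exact: hold.
  by apply: hnew; exact: issued_rcons_issue.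
- rewrite /upd; case: (y =P r) => [->|_]; last exact: hold.
  by apply: hnew; apply: issued_rcons_mono; case: (inv_msgs_pending hI hm).
Qed.

Lemma step_lastreq_issued pre s e s' : state_inv pre s -> step s e s' ->
  lastreq_issued (rcons pre e) s'.
Proof.
move=> hI hst.
have hold v z : lastreq s v = Some z -> rv z = v /\ issued0 (rcons pre e) z.
  by case/(inv_lastreq_issued hI) => hv hz; split => //; exact: issued0_rcons.
case: hst hI hold => {s e s'} [s r _|s r _|s r x u sg tau hm _ _ _|s r x u sg tau hm _ _ _]
  hI hold v z /=; try exact: hold.
all: rewrite /upd; case: (v =P rv r) => [->|_]; last exact: hold.
all: by case=> <-; split; rewrite // /issued0 issued_rcons_issue orbT.
Qed.

Lemma step_msgs_sent_in pre s e s' : state_inv pre s -> step s e s' ->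
  msgs_sent_in (rcons pre e) s'.
Proof.
move=> hI hst.
have hold m : m \in msgs s -> has (fun e0 : timed_event => e0.2 == msent m) (rcons pre e).
  by move=> hm; rewrite has_rcons (inv_msgs_sent_in hI hm) orbT.
case: hst hI hold => {s e s'} [s r _|s r _|s r x u sg tau hm _ _ _|s r x u sg tau hm _ _ _]
  hI hold m /=.
- exact: hold.
- by rewrite inE => /orP [/eqP ->|/hold //]; rewrite has_rcons /= eqxx.
- by move/mem_rem; exact: hold.
- by rewrite inE => /orP [/eqP ->|/mem_rem/hold //]; rewrite has_rcons /= eqxx.
Qed.

Lemma step_links_rooted pre s e s' : state_inv pre s -> step s e s' -> rooted (link s').
Proof.
move=> hI hst; case: hst hI => {s e s'} [s r _|s r _|s r x u sg tau hm _ _ _|s r x u sg tau hm _ _ _] hI /=.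
- exact: inv_links_rooted hI.
- exact: rooted_upd_self (inv_links_rooted hI).
- exact: rooted_upd (inv_links_rooted hI) (msg_link_avoid hI hm).
- exact: rooted_upd (inv_links_rooted hI) (msg_link_avoid hI hm).
Qed.

Lemma step_state_inv pre s e s' : state_inv pre s -> step s e s' -> fresh_issue pre e ->
  state_inv (rcons pre e) s'.
Proof.
move=> hI hst hfresh; split.
- exact: step_links_adj hI hst.
- exact: step_links_no_back hI hst.
- exact: step_msgs_on_edges hI hst.
- exact: step_msgs_uniq hI hst hfresh.
- exact: step_msgs_edge_disjoint hI hst.
- exact: step_edges_covered hI hst.
- exact: step_msgs_pending hI hst hfresh.
- exact: step_predq_issued hI hst.
- exact: step_lastreq_issued hI hst.
- exact: step_links_rooted hI hst.
- exact: step_msgs_sent_in hI hst.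
Qed.

Definition agree_off (s s' : state) z :=
  (forall x, x != z -> link s' x = link s x) /\ (forall x, x != z -> lastreq s' x = lastreq s x).

Lemma tail_agree_off s s' z u : agree_off s s' z -> (forall k, iter k (link s) u != z) ->
  tail s' u = tail s u.
Proof.
move=> [hl hr] hu; rewrite /tail /root (eq_iter_avoid hl) => [|i _]; last exact: hu.
exact: hr.
Qed.

Lemma tail_iter (s : state) u k : rooted (link s) -> tail s (iter k (link s) u) = tail s u.
Proof. by move=> hs; rewrite /tail root_iter. Qed.

Lemma tail_link (s : state) u : rooted (link s) -> tail s (link s u) = tail s u.
Proof. by move=> hs; rewrite /tail root_step. Qed.

Lemma tail_fixed (s : state) u : link s u = u -> tail s u = lastreq s u.
Proof. by move=> h; rewrite /tail root_id. Qed.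

Lemma tail_through s s' z u : agree_off s s' z -> rooted (link s) -> rooted (link s') ->
  (exists k, iter k (link s) u = z) -> tail s u = tail s z /\ tail s' u = tail s' z.
Proof.
move=> [hl _] hs hs' /ex_minn_iter [k [hk hmin]]; split; first by rewrite -hk tail_iter.
by rewrite -[in RHS]hk -(eq_iter_avoid hl hmin) tail_iter.
Qed.

Lemma qpred_agree_off s s' zs r : agree_off s s' zs -> rooted (link s) -> rooted (link s') ->
  (forall z, z != r -> predq s' z = predq s z /\ target (msgs s') z = target (msgs s) z) ->
  forall z, z != r -> qpred s' z = qpred s z \/ (qpred s z = tail s zs /\ qpred s' z = tail s' zs).
Proof.
move=> hag hs hs' hoff z hz; case: (hoff z hz) => hp ht.
rewrite /qpred hp ht; case: (predq s z) => [p|]; first by left.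
case: (target (msgs s) z) => [b|]; last by left.
case: (classic (exists k, iter k (link s) b = zs)) => hb; first by right; exact: tail_through.
by left; apply: tail_agree_off hag _ => k; apply/eqP => e; apply: hb; exists k.
Qed.

Definition tail_reaches (s : state) u z := exists2 L, tail s u = Some L & reaches (qpred s) L z.

Lemma tail_reaches_agree_off s s' zs u L : agree_off s s' zs -> rooted (link s) -> rooted (link s') ->
  (forall L, tail s zs = Some L -> tail_reaches s' zs L) ->
  tail s u = Some L -> tail_reaches s' u L.
Proof.
move=> hag hs hs' hzs hu.
case: (classic (exists k, iter k (link s) u = zs)) => hb.
  by case: (tail_through hag hs hs' hb) => e1 e2; rewrite /tail_reaches e2; apply: hzs; rewrite -e1.
exists L; last exact: reaches_refl.
by rewrite -hu; apply: tail_agree_off hag _ => k; apply/eqP => e; apply: hb; exists k.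
Qed.

Lemma qpred_fresh pre (s : state) r : state_inv pre s -> r != 0 -> ~~ issued pre r ->
  forall z, qpred s z != Some r.
Proof.
move=> hI h0 hn z; have hr : ~~ issued0 pre r by rewrite /issued0 negb_or h0.
rewrite /qpred; case e: (predq s z) => [p|].
  by apply: contraNneq hr => -[<-]; case: (inv_predq_issued hI e).
case: (target (msgs s) z) => [b|] //; apply: contraNneq hr => hb.
by case: (inv_lastreq_issued hI hb).
Qed.

Lemma tail_fresh pre (s : state) r u : state_inv pre s -> r != 0 -> ~~ issued pre r ->
  tail s u != Some r.
Proof.
move=> hI h0 hn; have hr : ~~ issued0 pre r by rewrite /issued0 negb_or h0.
by apply: contraNneq hr => /(inv_lastreq_issued hI) [].
Qed.

Lemma qpred_unissued pre (s : state) r : state_inv pre s -> ~~ issued pre r -> qpred s r = None.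
Proof.
move=> hI hn; rewrite /qpred (predq_unissued hI hn) target_none // => m hm.
exact: (mreq_unissued hI hn hm).
Qed.

Definition grows (s s' : state) :=
  [/\ forall z z', reaches (qpred s) z z' -> reaches (qpred s') z z',
      forall u L, tail s u = Some L -> tail_reaches s' u L
    & terminating (qpred s')].

Lemma grows_tail_reaches s s' u z : grows s s' -> tail_reaches s u z -> tail_reaches s' u z.
Proof.
case=> hreach htail _ [L hL hLz]; case: (htail _ _ hL) => L' hL' hL'L.
by exists L' => //; apply: reaches_trans hL'L (hreach _ _ hLz).
Qed.

Section GraphUpdate.
Variables (s s' : state) (zs : V).
Hypothesis agree_zs : agree_off s s' zs.
Hypothesis s_rooted : rooted (link s).
Hypothesis s'_rooted : rooted (link s').
Hypothesis s_terminating : terminating (qpred s).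

Lemma insert_grows r :
  (forall z, z != r -> predq s' z = predq s z /\ target (msgs s') z = target (msgs s) z) ->
  qpred s r = None -> qpred s' r = tail s zs -> tail s' zs = Some r ->
  (forall z, qpred s z != Some r) -> tail s zs != Some r -> grows s s'.
Proof.
move=> hoff hr hr' hzs hfresh hzs_r.
have hins z : z != r -> qpred s' z = qpred s z \/ (qpred s z = tail s zs /\ qpred s' z = Some r).
  move=> hz; case: (qpred_agree_off agree_zs s_rooted s'_rooted hoff hz) => [->|[-> ->]];
    by [left|right; rewrite hzs].
split.
- exact: insert_reaches hins hr hr'.
- move=> u L; apply: tail_reaches_agree_off agree_zs s_rooted s'_rooted _ => L0 hL0.
  by exists r => //; apply: reaches_edge; rewrite hr' hL0.
- exact: insert_terminating hins hr' hfresh hzs_r s_terminating.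
Qed.

Lemma shortcut_grows y a :
  (forall z, z != y -> predq s' z = predq s z /\ target (msgs s') z = target (msgs s) z) ->
  qpred s' y = qpred s y -> qpred s y = tail s zs -> tail s' zs = Some a ->
  reaches (qpred s) a y -> grows s s'.
Proof.
move=> hoff hy' hy hzs hay.
have hsc z : z != y -> qpred s' z = qpred s z \/ (qpred s z = qpred s y /\ qpred s' z = Some a).
  move=> hz; case: (qpred_agree_off agree_zs s_rooted s'_rooted hoff hz) => [->|[-> ->]];
    by [left|right; rewrite hzs hy].
split.
- exact: shortcut_reaches hsc hy' hay s_terminating.
- move=> u L; apply: tail_reaches_agree_off agree_zs s_rooted s'_rooted _ => L0 hL0.
  exists a => //; apply: reaches_trans (shortcut_target hsc hy' hay s_terminating) _.
  by apply: reaches_edge; rewrite hy' hy hL0.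
- exact: shortcut_terminating hsc hy' hay s_terminating.
Qed.

End GraphUpdate.

Definition msgs_tail_reaches (s : state) :=
  forall m, m \in msgs s -> tail_reaches s (msender m) (mreq m).

Record queue_inv pre (s : state) : Prop := {
  inv_state : state_inv pre s;
  inv_qpred_terminating : terminating (qpred s);
  inv_msgs_tail_reaches : msgs_tail_reaches s }.

Definition event_req (e : timed_event) := match e.1 with Issue r => r | Recv r _ _ _ => r end.

Definition event_node (e : timed_event) := match e.1 with Issue r => rv r | Recv _ _ u _ => u end.

Lemma step_agree_off s e s' : step s e s' -> agree_off s s' (event_node e).
Proof. by case=> {s e s'} *; split=> y hy /=; rewrite ?upd_neq. Qed.

Lemma step_off_req pre s e s' : state_inv pre s -> step s e s' ->
  forall z, z != event_req e -> predq s' z = predq s z /\ target (msgs s') z = target (msgs s) z.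
Proof.
move=> hI hst; case: hst hI => {s e s'} [s r _|s r _|s r x u sg tau hm _ _ _|s r x u sg tau hm _ _ _]
  hI z hz /=; rewrite ?upd_neq //.
- by rewrite /target /= eq_sym (negbTE hz).
- by rewrite (target_rem (inv_msgs_uniq hI) hm hz).
- by rewrite {1}/target /= eq_sym (negbTE hz) -/(target _ _) (target_rem (inv_msgs_uniq hI) hm hz).
Qed.

Lemma tail_upd_link s s' x u : agree_off s s' u -> rooted (link s') -> link s' u = x ->
  (forall k, iter k (link s) x != u) -> tail s' u = tail s x.
Proof. by move=> hag hs' hx hxu; rewrite -(tail_link _ hs') hx (tail_agree_off hag hxu). Qed.

Lemma step_issue_qpred pre s e s' r : state_inv pre s -> step s e s' -> e.1 = @Issue R V r ->
  ~~ issued pre r -> qpred s' r = tail s (rv r).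
Proof.
move=> hS hst; have hag := step_agree_off hst; have hs := inv_links_rooted hS.
case: hst hS hag hs => {s e s'} [s r' hl|s r' hl|s ? ? ? ? ? _ _ _ _|s ? ? ? ? ? _ _ _ _] hS hag hs //= [<-] hn.
- rewrite /qpred /= upd_eq (tail_fixed hl); case: (lastreq s (rv r')) => //.
  by rewrite target_none // => m hm; exact: (mreq_unissued hS hn hm).
- rewrite /qpred /= (predq_unissued hS hn) /target /= eqxx /= -(tail_link _ hs).
  by apply: (tail_agree_off hag) => k; apply: rooted_no_return => //; exact/eqP.
Qed.

Lemma step_recv_qpred pre s e s' r x u sg : state_inv pre s -> step s e s' ->
  e.1 = Recv r x u sg -> qpred s' r = tail s u /\ qpred s r = tail s u.
Proof.
move=> hS hst; have hag := step_agree_off hst; have hs := inv_links_rooted hS.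
case: hst hS hag hs => {s e s'} [s ? _|s ? _|s r' x' u' sg' tau hm _ _ hl|s r' x' u' sg' tau hm _ _ hl]
  hS hag hs //= [? ? ? ?]; subst.
all: have hu := inv_msgs_uniq hS; have hpend := proj2 (inv_msgs_pending hS hm).
all: have hr : qpred s r = tail s u by rewrite /qpred hpend (target_mem hu hm).
all: split => //; rewrite /qpred /=.
- by rewrite upd_eq -(tail_fixed hl); case: (tail s u) => //=; rewrite (target_rem_self hu hm).
- rewrite hpend /target /= eqxx /= -(tail_link _ hs).
  by apply: (tail_agree_off hag) => k; apply: rooted_no_return => //; exact/eqP.
Qed.

Lemma step_grows pre s e s' : queue_inv pre s -> step s e s' -> fresh_issue pre e -> grows s s'.
Proof.
move=> hI hst hfresh; have hS := inv_state hI.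
have hag := step_agree_off hst; have hoff := step_off_req hS hst.
have hs := inv_links_rooted hS; have hs' := step_links_rooted hS hst.
have hterm := inv_qpred_terminating hI.
have hiq := step_issue_qpred hS hst; have hrq := step_recv_qpred hS hst.
case: hst hI hS hag hoff hs hs' hterm hfresh hiq hrq => {s e s'}
  [s r hl|s r _|s r x u sg tau hm _ _ _|s r x u sg tau hm _ _ _]
  hI hS hag hoff hs hs' hterm hfresh hiq hrq; rewrite /event_node /event_req /= in hag hoff.
1,2: case: (hfresh r erefl) => h0 hn;
  apply: (insert_grows hag hs hs' hterm hoff (qpred_unissued hS hn) (hiq r erefl hn) _
    (qpred_fresh hS h0 hn) (tail_fresh _ hS h0 hn));
  by rewrite tail_fixed; rewrite /= /upd ?eqxx.
all: case: (hrq r x u sg erefl) => hr' hr; case: (inv_msgs_tail_reaches hI hm) => a ha hay.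
all: apply: (shortcut_grows hag hs hs' hterm hoff _ hr _ hay); first by rewrite hr'.
all: by rewrite (tail_upd_link hag hs' _ (msg_link_avoid hS hm)) //= upd_eq.
Qed.

Lemma step_msgs_tail_reaches pre s e s' : queue_inv pre s -> step s e s' -> fresh_issue pre e ->
  msgs_tail_reaches s'.
Proof.
move=> hI hst hfresh; have hS := inv_state hI.
have hgrow := step_grows hI hst hfresh.
have hold m : m \in msgs s -> tail_reaches s' (msender m) (mreq m).
  by move=> hm; apply: grows_tail_reaches hgrow (inv_msgs_tail_reaches hI hm).
have hag := step_agree_off hst; have hs' := step_links_rooted hS hst.
case: hst hI hS hgrow hold hag hs' => {s e s' hfresh}
  [s r _|s r _|s r x u sg tau hm _ _ _|s r x u sg tau hm _ _ _] hI hS hgrow hold hag hs' m /=;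
  rewrite /event_node /= in hag.
- exact: hold.
- rewrite inE => /orP [/eqP ->|/hold //].
  by exists r; [rewrite tail_fixed; rewrite /= /upd ?eqxx | exact: reaches_refl].
- by move/mem_rem; exact: hold.
- rewrite inE => /orP [/eqP ->|/mem_rem/hold //].
  case: (inv_msgs_tail_reaches hI hm) => a ha hay.
  exists a; last by case: hgrow => hreach _ _; exact: hreach.
  by rewrite (tail_upd_link hag hs' _ (msg_link_avoid hS hm)) //= upd_eq.
Qed.

Lemma step_queue_inv pre s e s' : queue_inv pre s -> step s e s' -> fresh_issue pre e ->
  queue_inv (rcons pre e) s'.
Proof.
move=> hI hst hfresh; split.
- exact: step_state_inv (inv_state hI) hst hfresh.
- by case: (step_grows hI hst hfresh).
- exact: step_msgs_tail_reaches hI hst hfresh.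
Qed.

Lemma step_predq_changed s e s' y : step s e s' -> predq s' y <> predq s y ->
  [/\ event_req e = y, link s (event_node e) = event_node e
    & predq s' y = lastreq s (event_node e)].
Proof.
case=> {s e s'} [s r hl|s r _|s r x u sg tau _ _ _ hl|s r x u sg tau _ _ _ _] //=;
  rewrite /event_req /event_node /upd /=; case: (y =P r) => // -> _.
Qed.

End Protocol.

Section Runs.
Variables (R : realFieldType) (V : finType) (w : V -> V -> R) (rv : nat -> V) (rt : nat -> R).
Notation run := (arrow_run w rv rt).
Notation step := (arrow_step w rv rt).

Lemma run_consP s e p s'' : run s (e :: p) s'' -> exists2 s', step s e s' & run s' p s''.
Proof. by move=> h; inversion_clear h as [|? ? s' ? ? hst hrun]; exists s'. Qed.

Lemma run_cat s p1 p2 s'' : run s (p1 ++ p2) s'' <-> exists2 s', run s p1 s' & run s' p2 s''.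
Proof.
split.
  elim: p1 s => [|e p1 IH] s /=; first by exists s => //; constructor.
  case/run_consP=> s1 hst /IH [s' h1 h2].
  by exists s' => //; apply: run_cons hst h1.
case=> s' h1; elim: h1 => //= {s p1 s'} s e s1 p s' hst _ IH /IH.
exact: run_cons hst.
Qed.

Lemma run_rcons s p e s'' : run s (rcons p e) s'' <-> exists2 s', run s p s' & step s' e s''.
Proof.
rewrite -cats1 run_cat; split => -[s' h1 h2]; exists s' => //.
  by case/run_consP: h2 => s1 hst h; inversion h; subst.
by apply: run_cons h2 (run_nil _ _ _ _).
Qed.

Lemma step_det s e s1 s2 : step s e s1 -> step s e s2 -> s1 = s2.
Proof. by move=> h1 h2; inversion h1; subst; inversion h2; subst => //; congruence. Qed.

Lemma run_det s p s1 s2 : run s p s1 -> run s p s2 -> s1 = s2.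
Proof.
move=> h1; elim: h1 s2 => {s p s1} [s|s e s' p s1 hst _ IH] s2 h2; first by inversion h2.
by case/run_consP: h2 => s3 /(step_det hst) <- /IH.
Qed.

Lemma step_keeps_msg s e s' (m : nat * V * V * R) : step s e s' -> m \in msgs s ->
  e.1 <> Recv m.1.1.1 m.1.1.2 m.1.2 m.2 -> m \in msgs s'.
Proof.
case: m => [[[r0 x0] u0] sg0] hst hm hne.
have hrem r x u sg : Recv r x u sg <> Recv r0 x0 u0 sg0 -> (r0, x0, u0, sg0) \in rem (r, x, u, sg) (msgs s).
  by move=> hrxu; apply: rem_mem hm; apply/eqP => -[? ? ? ?]; subst.
by case: hst hm hne hrem => {s e s'} [s r _|s r _|s r x u sg tau _ _ _ _|s r x u sg tau _ _ _ _]
  hm hne hrem //=; rewrite ?inE ?hm ?hrem ?orbT.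
Qed.

Lemma msg_received_later s p sf m x0 : run s p sf -> msgs sf = [::] -> m \in msgs s ->
  exists2 j, j < size p & (nth x0 p j).1 = Recv m.1.1.1 m.1.1.2 m.1.2 m.2.
Proof.
move=> h; elim: h => {s p sf} [s|s e s' p sf hst _ IH] hf hm; first by rewrite hf in hm.
case: (classic (e.1 = Recv m.1.1.1 m.1.1.2 m.1.2 m.2)) => he; first by exists 0.
by case: (IH hf (step_keeps_msg hst hm he)) => j hj hj'; exists j.+1.
Qed.

End Runs.

Section TreeDistance.
Variables (R : realFieldType) (V : finType) (adj : rel V) (w d : V -> V -> R).
Local Open Scope ring_scope.
Hypothesis w_pos : forall u v, adj u v -> 0 < w u v.
Hypothesis adj_tree : is_tree adj.
Hypothesis d_tree : is_tree_dist adj w d.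

Lemma path_weight_ge0 u p : path adj u p -> 0 <= path_weight w u p.
Proof.
elim: p u => [|y p IH] u //= /andP [h1 h2].
by apply: addr_ge0; [exact/ltW/w_pos | exact: IH].
Qed.

Lemma dist_path u v : exists p, [/\ path adj u p, last u p = v & d u v = path_weight w u p].
Proof.
case: (adj_tree u v) => p [hp _]; exists p.
by case/and3P: (hp) => h1 /eqP h2 _; split => //; exact: d_tree.
Qed.

Lemma dist_ge0 u v : 0 <= d u v.
Proof. by case: (dist_path u v) => p [hp _ ->]; exact: path_weight_ge0. Qed.

Lemma dist_xx u : d u u = 0.
Proof. by rewrite (d_tree (p := [::])) // /simple_path /= eqxx. Qed.

End TreeDistance.

Section Execution.
Variables (R : realFieldType) (V : finType) (adj : rel V)
    (w d : V -> V -> R) (v0 : V) (link0 : V -> V) (n : nat)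
    (rv : nat -> V) (rt : nat -> R) (tr : seq (event R V * R))
    (stf : astate R V) (q : nat -> nat).
Hypothesis wtree : weighted_tree adj w.
Hypothesis d_tree : is_tree_dist adj w d.
Hypothesis exec : arrow_execution adj w d v0 link0 n rv rt tr stf.
Hypothesis queue : queue_order n stf q.

Notation timed_event := (event R V * R)%type.
Notation run := (arrow_run w rv rt).
Notation step := (arrow_step w rv rt).
Notation s_init := (init_state R v0 link0).

Let adj_sym : symmetric adj. Proof. by case: wtree. Qed.
Let adj_irr : irreflexive adj. Proof. by case: wtree. Qed.
Let w_pos : forall u v, adj u v -> (0 < w u v)%R. Proof. by case: wtree. Qed.
Let w_sym : forall u v, adj u v -> w u v = w v u. Proof. by case: wtree. Qed.
Let adj_tree : is_tree adj. Proof. by case: wtree. Qed.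
Let rv0 : rv 0 = v0. Proof. by case: exec => -[]. Qed.
Let link0_init : init_links adj w d v0 link0. Proof. by case: exec. Qed.
Let tr_run : run s_init tr stf. Proof. by case: exec. Qed.
Let tr_sorted : sorted <=%R (map snd tr). Proof. by case: exec => _ _ _ _ []. Qed.
Let tr_issues : forall r, count (is_issue_of r) tr = (0 < r <= n). Proof. by case: exec => _ _ _ _ []. Qed.
Let stf_no_msgs : msgs stf = [::]. Proof. by case: exec => _ _ _ _ []. Qed.

Lemma init_queue_inv : queue_inv adj rv [::] s_init.
Proof.
split; first split => //=.
- exact: init_link_adj link0_init.
- exact: init_link_no_back w_pos link0_init.
- move=> p u hpu; case: (init_link_edge adj_tree adj_irr w_pos link0_init adj_sym hpu) => h.
  + by constructor 1.
  + by constructor 2.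
- by move=> u x /=; case: (u =P v0) => [-> [<-]|//]; split; [exact: rv0 | rewrite /issued0 eqxx].
- exact: init_links_rooted w_pos link0_init.
- by move=> z; exists 1.
- by [].
Qed.

Let ev0 : timed_event := (@Issue R V 0, 0%R).

Definition state_after k s := run s_init (take k tr) s.

Lemma state_after_split k : exists2 s, state_after k s & run s (drop k tr) stf.
Proof. by apply/run_cat; rewrite cat_take_drop. Qed.

Lemma state_after_det k s1 s2 : state_after k s1 -> state_after k s2 -> s1 = s2.
Proof. exact: run_det. Qed.

Lemma state_after_final : state_after (size tr) stf.
Proof. by rewrite /state_after take_size; exact: tr_run. Qed.

Lemma state_after_step i s s' : i < size tr -> state_after i s -> state_after i.+1 s' ->
  step s (nth ev0 tr i) s'.
Proof.
move=> hi h1; rewrite /state_after (take_nth ev0 hi) => /run_rcons [s1 h2 h3].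
by rewrite (state_after_det h1 h2).
Qed.

Lemma trace_step i : i < size tr ->
  exists s, exists2 s', state_after i s /\ state_after i.+1 s' & step s (nth ev0 tr i) s'.
Proof.
move=> hi; case: (state_after_split i) => s hs _; case: (state_after_split i.+1) => s' hs' _.
by exists s, s' => //; exact: state_after_step.
Qed.

Lemma nth_fresh_issue i : i < size tr -> fresh_issue (take i tr) (nth ev0 tr i).
Proof.
move=> hi r hr; have hc := tr_issues r.
have hsplit : count (is_issue_of r) tr =
    count (is_issue_of r) (take i tr) + 1 + count (is_issue_of r) (drop i.+1 tr).
  rewrite -{1}(cat_take_drop i.+1 tr) count_cat (take_nth ev0 hi) -cats1 count_cat /=.
  by rewrite /is_issue_of hr eqxx.
have h0 : r != 0 by apply/eqP => e; move: hc; rewrite hsplit e; lia.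
split => //; rewrite /issued has_count; move: hc; rewrite hsplit; case: (0 < r <= n); lia.
Qed.

Lemma state_after_inv k s : state_after k s -> queue_inv adj rv (take k tr) s.
Proof.
elim: k s => [|k IH] s.
  by rewrite /state_after take0 => h; inversion h; exact: init_queue_inv.
case: (ltnP k (size tr)) => hk.
  rewrite /state_after (take_nth ev0 hk) => /run_rcons [s1 h1 h2].
  exact: (step_queue_inv adj_sym adj_irr adj_tree (IH _ h1) h2 (nth_fresh_issue hk)).
have htake : take k.+1 tr = take k tr by rewrite !take_oversize // (leqW hk).
by rewrite /state_after htake; exact: IH.
Qed.

Lemma state_after_grows k s s' : k < size tr -> state_after k s -> state_after k.+1 s' -> grows s s'.
Proof.
move=> hk hs hs'; apply: (step_grows adj_irr adj_tree (state_after_inv hs)).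
  exact: state_after_step hk hs hs'.
exact: nth_fresh_issue.
Qed.

Lemma state_after_mono k k' s s' : k <= k' -> k' <= size tr -> state_after k s -> state_after k' s' ->
  (forall z z', reaches (qpred s) z z' -> reaches (qpred s') z z') /\
  (forall u z, tail_reaches s u z -> tail_reaches s' u z).
Proof.
move=> hkk'; elim: k' hkk' s' => [|k' IH] hkk' s' hk' hs hs'.
  have ek : k = 0 by lia.
  by rewrite ek in hs; rewrite (state_after_det hs hs'); split.
case: (ltnP k k'.+1) => hlt; last first.
  have ek : k = k'.+1 by lia.
  by rewrite ek in hs; rewrite (state_after_det hs hs'); split.
case: (state_after_split k') => s1 hs1 _.
have hkk : k <= k' by lia.
have [hreach htail] := IH hkk s1 (ltnW hk') hs hs1.
have hgrow := state_after_grows hk' hs1 hs'.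
split=> [z z' /hreach|u z /htail]; first by case: hgrow => h _ _; apply: h.
exact: grows_tail_reaches hgrow.
Qed.

Lemma nth_time_mono i j : i <= j -> j < size tr -> ((nth ev0 tr i).2 <= (nth ev0 tr j).2)%R.
Proof.
move=> hij hj; have := sorted_leq_nth (@le_trans _ R) (@lexx _ R) 0%R tr_sorted.
move=> /(_ i j); rewrite !inE !size_map !(nth_map ev0) //; last by lia.
by apply => //; lia.
Qed.

(* Since the trace is time-ordered, [events_upto T] is the number of events at time at most T. *)
Definition events_upto (T : R) := find (fun e : timed_event => (T < e.2)%R) tr.

Lemma events_upto_size T : events_upto T <= size tr.
Proof. exact: find_size. Qed.

Lemma time_le_of_lt_events_upto i T : i < events_upto T -> ((nth ev0 tr i).2 <= T)%R.
Proof. by move=> h; have := before_find ev0 h; move/negbT; rewrite -leNgt. Qed.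

Lemma events_upto_le i T : i < size tr -> (T < (nth ev0 tr i).2)%R -> events_upto T <= i.
Proof.
move=> hi hT; rewrite leqNgt; apply/negP => /time_le_of_lt_events_upto.
by rewrite leNgt hT.
Qed.

Lemma lt_events_upto i T : i < size tr -> ((nth ev0 tr i).2 <= T)%R -> i < events_upto T.
Proof.
move=> hi hT; rewrite ltnNge; apply/negP => h.
have hh : has (fun e : timed_event => (T < e.2)%R) tr by rewrite has_find (leq_ltn_trans h hi).
have := lt_le_trans (nth_find ev0 hh) (nth_time_mono h hi).
by rewrite ltNge hT.
Qed.

Lemma events_upto_mono T1 T2 : (T1 <= T2)%R -> events_upto T1 <= events_upto T2.
Proof.
move=> h; rewrite leqNgt; apply/negP => hlt.
have hh : has (fun e : timed_event => (T2 < e.2)%R) tr.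
  by rewrite has_find (leq_trans hlt (events_upto_size T1)).
have := lt_le_trans (nth_find ev0 hh) (time_le_of_lt_events_upto hlt).
by rewrite ltNge h.
Qed.

Lemma issue_in_trace r : 0 < r <= n -> exists2 i, i < size tr & (nth ev0 tr i).1 = @Issue R V r.
Proof.
move=> hr; have : has (is_issue_of r) tr by rewrite has_count tr_issues hr.
case/(has_nthP ev0) => i hi; rewrite /is_issue_of.
by case e: (nth ev0 tr i) => [[r'|] t] //= /eqP er; exists i => //; rewrite e er.
Qed.

Lemma issue_step_facts s r t s' : step s (@Issue R V r, t) s' ->
  [/\ t = rt r, link s' (rv r) = rv r & lastreq s' (rv r) = Some r].
Proof. by move=> h; inversion h; subst; rewrite /= ?upd_eq. Qed.

Lemma recv_step_facts s r x u sg tau s' : step s (Recv r x u sg, tau) s' ->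
  [/\ (r, x, u, sg) \in msgs s, (tau <= sg + w x u)%R & link s' u = x].
Proof. by move=> h; inversion h; subst; rewrite /= ?upd_eq. Qed.

Lemma final_inv : queue_inv adj rv tr stf.
Proof. by have := state_after_inv state_after_final; rewrite take_size. Qed.

Lemma qpred_final_dummy : qpred stf 0 = None.
Proof.
rewrite /qpred stf_no_msgs; case e: (predq stf 0) => [z|] //.
case: (inv_predq_issued (inv_state final_inv) e).
by rewrite /issued has_count tr_issues.
Qed.

Lemma final_chain i k z : i <= n -> chain (qpred stf) k (q i) = Some z -> k <= i /\ z = q (i - k).
Proof.
case: queue => hq0 hpred _ _ hi.
elim: k z => [|k IH] z; first by case=> <-; rewrite subn0.
rewrite chainS; case e: (chain (qpred stf) k (q i)) => [z0|] //= hz.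
case: (IH _ e) => hk ez0; rewrite ez0 in hz.
move: hz; case: (ltnP k i) => hki.
  have -> : i - k = (i - k.+1).+1 by lia.
  by rewrite /qpred hpred; [case=> <- | lia].
have -> : i - k = 0 by lia.
by rewrite hq0 qpred_final_dummy.
Qed.

Lemma final_reaches_le i j : i <= n -> j <= n -> reaches (qpred stf) (q i) (q j) -> j <= i.
Proof.
move=> hi hj [k hk]; case: (final_chain hi hk) => hki e.
case: queue => _ _ _ hinj.
have := hinj _ _ hj (_ : i - k <= n) e; lia.
Qed.

Lemma queue_range j : 0 < j <= n -> 0 < q j <= n.
Proof.
case: queue => hq0 _ hle hinj /andP [hj1 hj2].
rewrite hle // andbT lt0n; apply/eqP => e.
by have := hinj _ _ hj2 (leq0n n); rewrite e hq0 => /(_ erefl); lia.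
Qed.

Lemma tail_reaches_later k k' s s' u z : k <= k' -> k' <= size tr ->
  state_after k s -> state_after k' s' -> tail_reaches s u z -> tail_reaches s' u z.
Proof. by move=> hkk' hk' hs hs'; case: (state_after_mono hkk' hk' hs hs') => _; apply. Qed.

Definition tail_reaches_from (T : R) u z :=
  forall k s, events_upto T <= k -> k <= size tr -> state_after k s -> tail_reaches s u z.

Lemma tail_reaches_from_issue r : 0 < r <= n -> tail_reaches_from (rt r) (rv r) r.
Proof.
move=> hr k s hk hks hs; case: (issue_in_trace hr) => i hi hev.
case: (trace_step hi) => s1 [s2 [_ hs2] hst].
case e: (nth ev0 tr i) hst hev => [ev t] hst /= hev; subst ev.
case: (issue_step_facts hst) => ht hlk hlr.
have hik : i < k by apply: leq_trans hk; apply: lt_events_upto => //; rewrite e ht.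
apply: (tail_reaches_later hik hks hs2 hs).
by exists r; [rewrite tail_fixed | exact: reaches_refl].
Qed.

Lemma msg_receipt k0 sy m : state_after k0 sy -> m \in msgs sy ->
  exists2 kr, k0 <= kr < size tr & (nth ev0 tr kr).1 = Recv m.1.1.1 m.1.1.2 m.1.2 m.2.
Proof.
move=> hsy hm; case: (state_after_split k0) => s' hs' hrest.
rewrite (state_after_det hsy hs') in hm.
case: (msg_received_later ev0 hrest stf_no_msgs hm) => j; rewrite size_drop nth_drop => hj hjm.
by exists (k0 + j) => //; apply/andP; split; lia.
Qed.

Lemma msg_sent_by T sy m : state_after (events_upto T) sy -> m \in msgs sy -> (msent m <= T)%R.
Proof.
move=> hsy hm; have := inv_msgs_sent_in (inv_state (state_after_inv hsy)) hm.
case/(has_nthP ev0) => i; rewrite size_takel ?events_upto_size // => hi.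
by rewrite nth_take // => /eqP <-; exact: time_le_of_lt_events_upto.
Qed.

(* A find message in flight from y to u at time T arrives by time T + w u y,
   after which u points to y. *)
Lemma tail_reaches_via_msg z u y T sy m : state_after (events_upto T) sy -> m \in msgs sy ->
  msender m = y -> mreceiver m = u -> tail_reaches sy y z -> tail_reaches_from (T + w u y) u z.
Proof.
move=> hsy hm hsm hrm gy k s hk hks hs.
case: (msg_receipt hsy hm) => kr /andP [hTkr hkr] hev.
case: (trace_step hkr) => si [si1 [_ hsi1] hst].
case e: (nth ev0 tr kr) hst hev => [ev tau] hst /= hev; subst ev.
case: (recv_step_facts hst) => _ htau hlink.
have hadj : adj y u.
  by rewrite -hsm -hrm; case: (inv_msgs_on_edges (inv_state (state_after_inv hsy)) hm).
change (is_true (tau <= msent m + w (msender m) (mreceiver m))%R) in htau.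
change (link si1 (mreceiver m) = msender m) in hlink.
rewrite hsm hrm (w_sym hadj) in htau hlink.
have hkrk : kr < k.
  apply: leq_trans hk; apply: lt_events_upto => //; rewrite e /=.
  by apply: le_trans htau _; rewrite lerD2r; exact: msg_sent_by hsy hm.
apply: (tail_reaches_later hkrk hks hsi1 hs).
case: (tail_reaches_later (leqW hTkr) hkr hsy hsi1 gy) => L hL hLz; exists L => //.
by rewrite -(tail_link u (inv_links_rooted (inv_state (state_after_inv hsi1)))) hlink.
Qed.

Lemma tail_reaches_from_edge z u y T : adj u y -> tail_reaches_from T y z ->
  tail_reaches_from (T + w u y) u z.
Proof.
move=> huy hy k s hk hks hs.
have hTk : events_upto T <= k.
  by apply: leq_trans (events_upto_mono _) hk; rewrite lerDl; exact/ltW/w_pos.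
case: (state_after_split (events_upto T)) => sy hsy _.
have gy := hy _ _ (leqnn _) (events_upto_size T) hsy.
have hI := state_after_inv hsy; have hS := inv_state hI.
have hyu : adj y u by rewrite adj_sym.
have later := tail_reaches_later hTk hks hsy hs.
have [hlu|hly|[m hm hse]] := inv_edges_covered hS hyu.
- by apply: later; move: gy; rewrite /tail_reaches -hlu (tail_link _ (inv_links_rooted hS)).
- by apply: later; move: gy; rewrite /tail_reaches -hly (tail_link _ (inv_links_rooted hS)).
case/orP: hse => /andP [/eqP hsm /eqP hrm].
- exact: (tail_reaches_via_msg hsy hm hsm hrm gy hk hks hs).
- apply: later; case: (inv_msgs_tail_reaches hI hm) => L hL hLm; rewrite hsm in hL.
  case: gy => Ly hLy hLyz; exists L => //; apply: reaches_trans hLm (reaches_cons _ hLyz).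
  by rewrite /qpred (proj2 (inv_msgs_pending hS hm)) (target_mem (inv_msgs_uniq hS) hm) -hLy hrm.
Qed.

Lemma tail_reaches_from_path r p u : 0 < r <= n -> path adj u p -> last u p = rv r ->
  tail_reaches_from (rt r + path_weight w u p) u r.
Proof.
move=> hr; elim: p u => [|y p IH] u /=; first by rewrite addr0 => _ ->; exact: tail_reaches_from_issue.
case/andP=> huy hp hl; rewrite addrCA addrC.
exact: tail_reaches_from_edge huy (IH _ hp hl).
Qed.

Lemma tail_reaches_from_dist r u : 0 < r <= n -> tail_reaches_from (rt r + d u (rv r)) u r.
Proof.
move=> hr; case: (dist_path adj_tree d_tree u (rv r)) => p [hp hl ->].
exact: tail_reaches_from_path.
Qed.

Lemma reach_time_le_issue r u : (reach_time d rv rt tr r u <= rt r + d (rv r) u)%R.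
Proof.
rewrite /reach_time; elim: tr => [|[[r'|r' x b sg] t] p IH] //=.
by case: ifP => // _; rewrite ge_min IH orbT.
Qed.

Lemma reach_time_le_recv i r x b sg tau u : nth ev0 tr i = (Recv r x b sg, tau) ->
  i < size tr -> (reach_time d rv rt tr r u <= tau + d b u)%R.
Proof.
rewrite /reach_time; elim: tr i => [|e p IH] [|i] //=; first by move=> -> _; rewrite eqxx ge_min lexx.
move=> /IH h /h; case: e => [[r'|r' x' b' sg'] t'] //=.
by case: ifP => // _ h'; rewrite ge_min h' orbT.
Qed.

Lemma reach_time_le_step i s s' u : i < size tr -> step s (nth ev0 tr i) s' ->
  (reach_time d rv rt tr (event_req (nth ev0 tr i)) u
     <= (nth ev0 tr i).2 + d (event_node rv (nth ev0 tr i)) u)%R.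
Proof.
move=> hi; case e: (nth ev0 tr i) => [[r|r x b sg] t]; rewrite /event_req /event_node /=.
  by case/issue_step_facts => -> _ _; exact: reach_time_le_issue.
by move=> _; exact: reach_time_le_recv e hi.
Qed.

Lemma predq_set_at y z : predq stf y = Some z ->
  exists2 k, k < size tr & exists s, exists2 s', state_after k s /\ state_after k.+1 s' &
    predq s' y = Some z /\ predq s' y <> predq s y.
Proof.
move=> hf.
suff : forall k s, state_after k s -> predq s y = Some z ->
    exists2 i, i < k & exists s1, exists2 s2, state_after i s1 /\ state_after i.+1 s2 &
      predq s2 y = Some z /\ predq s2 y <> predq s1 y.
  move=> /(_ _ _ state_after_final hf) [i hi h]; exists i => //.
elim=> [|k IH] s hs hp.
  by move: hs; rewrite /state_after take0 => h; inversion h; subst.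
case: (state_after_split k) => s1 hs1 _.
case e: (predq s1 y) => [z'|].
  case: (z' =P z) => [ez|nz]; first by rewrite ez in e; case: (IH _ hs1 e) => i hi h; exists i => //; lia.
  by exists k => //; exists s1, s => //; split => //; rewrite e hp => -[/esym].
by exists k => //; exists s1, s => //; split => //; rewrite e hp.
Qed.

Lemma issue_time_gap i j : i < j <= n -> (rt (q i) - rt (q j) <= d (rv (q i)) (rv (q j)))%R.
Proof.
move=> /andP [hij hjn]; have hrj : 0 < q j <= n by apply: queue_range; lia.
case: i hij => [|i] hij.
  case: queue => -> _ _ _; case: exec => -[_ ->] hrt _ _ _.
  by have := dist_ge0 w_pos adj_tree d_tree (rv 0) (rv (q j)); have := hrt _ hrj; lra.
have hri : 0 < q i.+1 <= n by apply: queue_range; lia.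
rewrite lerBlDl leNgt; apply/negP => hlt.
case: (issue_in_trace hri) => k hk hev.
case: (trace_step hk) => s1 [s2 [hs1 hs2] hst].
have hI := state_after_inv hs1.
have hfresh := nth_fresh_issue hk; have hgrow := step_grows adj_irr adj_tree hI hst hfresh.
have hq := step_issue_qpred (inv_state hI) hst hev.
case e: (nth ev0 tr k) hfresh hst hev hq => [ev t] hfresh hst /= hev hq; subst ev.
case: (issue_step_facts hst) => ht _ _; case: (hfresh _ erefl) => _ hn.
have hkT : events_upto (rt (q j) + d (rv (q i.+1)) (rv (q j))) <= k.
  by apply: events_upto_le hk _; rewrite e /= ht.
case: (tail_reaches_from_dist (u := rv (q i.+1)) hrj hkT (ltnW hk) hs1) => L hL hLj.
have hreach : reaches (qpred s2) (q i.+1) (q j).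
  by case: hgrow => hgrow _ _; apply: reaches_cons (hgrow _ _ hLj); rewrite (hq hn).
have := (state_after_mono hk (leqnn _) hs2 state_after_final).1 _ _ hreach.
by move/final_reaches_le => /(_ (_ : i.+1 <= n) hjn); lia.
Qed.

Lemma reach_time_gap i j : 0 < i -> i < j <= n ->
  (rt (q i) + Delta d rv rt tr (q i) (rv (q i.-1)) <= rt (q j) + d (rv (q i.-1)) (rv (q j)))%R.
Proof.
move=> hi0 /andP [hij hjn]; have hrj : 0 < q j <= n by apply: queue_range; lia.
rewrite /Delta addrC subrK.
have hpred : predq stf (q i) = Some (q i.-1).
  by case: queue => _ hp _ _; rewrite -{1}(prednK hi0) hp //; lia.
case: (predq_set_at hpred) => k hk [s [s' [hs hs'] [hps' hne]]].
have hst := state_after_step hk hs hs'.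
case: (step_predq_changed hst hne) => hreq hlink hlast.
set b := event_node rv (nth ev0 tr k) in hlink hlast.
have hS := inv_state (state_after_inv hs).
case: (inv_lastreq_issued hS (etrans (esym hlast) hps')) => hb _.
apply: le_trans (_ : _ <= (nth ev0 tr k).2)%R _.
  by have := reach_time_le_step (rv (q i.-1)) hk hst; rewrite hreq -/b -hb (dist_xx d_tree) addr0.
rewrite hb leNgt; apply/negP => hlt.
have hkT : events_upto (rt (q j) + d b (rv (q j))) <= k by exact: events_upto_le.
case: (tail_reaches_from_dist (u := b) hrj hkT (ltnW hk) hs) => L.
rewrite tail_fixed // -hlast hps' => -[<-] hLj.
have := (state_after_mono (ltnW hk) (leqnn _) hs state_after_final).1 _ _ hLj.
by move/final_reaches_le => /(_ (_ : i.-1 <= n) hjn); lia.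
Qed.

End Execution.

Local Open Scope ring_scope.

Theorem lemma14 (R : realFieldType) (V : finType) (adj : rel V)
    (w d : V -> V -> R) (v0 : V) (link0 : V -> V) (n : nat)
    (rv : nat -> V) (rt : nat -> R) (tr : seq (@event R V * R))
    (stf : @astate R V) (q : nat -> nat) :
  weighted_tree adj w ->
  is_tree_dist adj w d ->
  arrow_execution adj w d v0 link0 n rv rt tr stf ->
  queue_order n stf q ->
  forall i j : nat, (i < j <= n)%N ->
    rt (q i) - rt (q j) <= d (rv (q i)) (rv (q j)) /\
    ((0 < i)%N ->
       rt (q i) + Delta d rv rt tr (q i) (rv (q i.-1))
         <= rt (q j) + d (rv (q i.-1)) (rv (q j))).
Proof.
move=> hw hd hexec hq i j hij; split; first exact: (issue_time_gap hw hd hexec hq hij).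
by move=> hi; exact: (reach_time_gap hw hd hexec hq hi hij).
Qed.
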